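(* Let $\mathfrak{M}$ be a variety of associative rings such that for all finite rings $R,S\in\mathfrak{M}$, $\Gamma(R)\cong\Gamma(S)$ implies $R\cong S$. Then for every finite ring $R\in\mathfrak{M}$ there exist pairwise distinct prime numbers $q_1,\ldots,q_t$ such that $q_1^2q_2^2\cdots q_t^2R=(0)$.
   Context: All rings are associative, not necessarily commutative and not necessarily with identity. For a ring $R$, the zero-divisor graph $\Gamma(R)$ is the graph whose vertices are all nonzero (one-sided or two-sided) zero-divisors of $R$, two distinct vertices $x,y$ being adjacent iff $xy=0$ or $yx=0$. *)

From HB Require Import structures.
From mathcomp Require Import all_boot all_order all_algebra.
Set Implicit Arguments. Unset Strict Implicit. Unset Printing Implicit Defensive.
Import GRing.Theory.
Local Open Scope ring_scope.

Record finRng := FinRng {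
  rcar :> finZmodType;
  rmul : rcar -> rcar -> rcar;
  rmulA : forall x y z, rmul x (rmul y z) = rmul (rmul x y) z;
  rmulDl : forall x y z, rmul (x + y) z = rmul x z + rmul y z;
  rmulDr : forall x y z, rmul x (y + z) = rmul x y + rmul x z }.

(* Terms of the free (non-unital) associative ring on countably many
   variables x_0, x_1, ...  (integer coefficients via 0, +, -). *)
Inductive rterm : Type :=
  | RVar of nat
  | RZero
  | RAdd of rterm & rterm
  | ROpp of rterm
  | RMul of rterm & rterm.

Fixpoint reval (R : finRng) (v : nat -> R) (t : rterm) : R :=
  match t with
  | RVar n => v n
  | RZero => 0
  | RAdd a b => reval v a + reval v b
  | ROpp a => - reval v a
  | RMul a b => rmul (reval v a) (reval v b)
  end.

(* A variety of associative rings is determined by a set of identities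
   t1 = t2; a ring belongs to it iff it satisfies all of them. *)
Definition variety := rterm * rterm -> Prop.

Definition in_variety (M : variety) (R : finRng) : Prop :=
  forall e, M e -> forall v : nat -> R, reval v e.1 = reval v e.2.

(* Nonzero (one-sided or two-sided) zero-divisors: the vertices of Gamma(R). *)
Definition zero_divisor (R : finRng) (x : R) : bool :=
  (x != 0) && [exists y : R, (y != 0) && ((rmul x y == 0) || (rmul y x == 0))].
Arguments zero_divisor : clear implicits.

Definition zd_adj (R : finRng) (x y : R) : bool :=
  (x != y) && ((rmul x y == 0) || (rmul y x == 0)).

Definition gamma_iso (R S : finRng) : Prop :=
  exists f : R -> S,
    [/\ {in zero_divisor R, forall x, zero_divisor S (f x)},
        {in zero_divisor R &, injective f},
        (forall y, zero_divisor S y -> exists2 x, zero_divisor R x & f x = y) &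
        {in zero_divisor R &, forall x y, zd_adj (f x) (f y) = zd_adj x y}].

Definition ring_iso (R S : finRng) : Prop :=
  exists f : R -> S,
    [/\ bijective f,
        (forall x y, f (x + y) = f x + f y) &
        (forall x y, f (rmul x y) = rmul (f x) (f y))].

From HB Require Import structures.
From mathcomp Require Import all_boot all_order all_algebra all_fingroup cyclic zify.
Import GRing.Theory FinRing.Theory.
Set Implicit Arguments. Unset Strict Implicit. Unset Printing Implicit Defensive.
Local Open Scope ring_scope.

(* A nonzero idempotent e of additive order n would put the ring Z/n = Ze, and
   hence its quotient F_p (p | n), into M; but Gamma(F_p) and Gamma of the
   trivial ring are both empty.  So every element of a ring in M is nilpotent.
   A square-zero w of additive order p^2 would put the zero rings on Z/p^2 and
   (Z/p)^2 into M, and both have complete zero-divisor graphs on p^2 - 1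
   vertices.  If x p^3 = 0 but x p^2 <> 0, then among the repeated squares
   x, x^2, x^4, ... (eventually 0) the last y with y p^2 <> 0 gives such a
   w = y p.  Hence p^2 kills the p-part of every additive order. *)

Section RngArithmetic.
Variable R : finRng.
Implicit Types x y : R.

Lemma rmul0l y : rmul 0 y = 0 :> R.
Proof. by apply: (@addrI _ (rmul 0 y)); rewrite -rmulDl !addr0. Qed.

Lemma rmul0r y : rmul y 0 = 0 :> R.
Proof. by apply: (@addrI _ (rmul y 0)); rewrite -rmulDr !addr0. Qed.

Lemma rmulnl x y n : rmul (x *+ n) y = rmul x y *+ n.
Proof. by elim: n => [|n IH]; rewrite ?rmul0l // !mulrS rmulDl IH. Qed.

Lemma rmulnr x y n : rmul y (x *+ n) = rmul y x *+ n.
Proof. by elim: n => [|n IH]; rewrite ?rmul0r // !mulrS rmulDr IH. Qed.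

(* [rpowS a n] is a ^ n.+1: without a unit there is no a ^ 0. *)
Fixpoint rpowS (a : R) n := if n is n'.+1 then rmul a (rpowS a n') else a.

Lemma rpowS_add a m n : rmul (rpowS a m) (rpowS a n) = rpowS a (m + n).+1.
Proof. by elim: m => [|m IH] //=; rewrite -rmulA IH. Qed.

Lemma rpowS_sqr a n : rpowS (rmul a a) n = rpowS a n.*2.+1.
Proof. by elim: n => [|n IH] //=; rewrite IH rmulA. Qed.

Lemma rpowS_eq0 a m n : (m <= n)%N -> rpowS a m = 0 -> rpowS a n = 0.
Proof.
rewrite leq_eqVlt => /orP [/eqP <- //| lt_mn] am0.
have -> : n = (m + (n - m).-1).+1 by lia.
by rewrite -rpowS_add am0 rmul0l.
Qed.

Lemma rpowS_periodic a i d : rpowS a (i + d) = rpowS a i ->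
  forall c m, rpowS a (i + m + c * d) = rpowS a (i + m).
Proof.
move=> per; have per1 m : rpowS a (i + m + d) = rpowS a (i + m).
  case: m => [|m]; first by rewrite addn0.
  have -> : (i + m.+1 + d = (m + (i + d)).+1)%N by lia.
  by rewrite -rpowS_add per rpowS_add addnC addnS.
elim=> [|c IH] m; first by rewrite mul0n addn0.
have -> : (i + m + c.+1 * d = i + (m + c * d) + d)%N by rewrite mulSn; lia.
by rewrite per1 addnA IH.
Qed.

Lemma exists_idempotent_power a :
  exists k, rmul (rpowS a k) (rpowS a k) = rpowS a k.
Proof.
have [i [d [d_gt0 per]]] : exists i d, (0 < d)%N /\ rpowS a (i + d) = rpowS a i.
  have /injectivePn [i [j ne_ij eq_ij]] :
      ~~ injectiveb (fun k : 'I_#|R|.+1 => rpowS a k).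
    by apply/negP => /injectiveP /leq_card; rewrite card_ord ltnn.
  case: (ltngtP i j) => [lt_ij|lt_ji|/val_inj eq]; last by rewrite eq eqxx in ne_ij.
  - by exists i, (j - i)%N; rewrite subn_gt0 subnKC ?(ltnW lt_ij).
  - by exists j, (i - j)%N; rewrite subn_gt0 subnKC ?(ltnW lt_ji).
(* a ^ t is idempotent for any t >= i that is a multiple of the period d *)
exists (d * i.+1).-1; rewrite rpowS_add.
have -> : ((d * i.+1).-1 + (d * i.+1).-1).+1
          = (i + ((d * i.+1).-1 - i) + i.+1 * d)%N.
  have : (i.+1 <= d * i.+1)%N by rewrite leq_pmull.
  by rewrite mulnC; lia.
by rewrite rpowS_periodic // subnKC // -ltnS prednK ?muln_gt0 ?d_gt0 // leq_pmull.
Qed.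

Lemma nilpotent_sqr_ind (P : R -> Prop) :
  P 0 -> (forall y, P (rmul y y) -> P y) ->
  forall x N, rpowS x N = 0 -> P x.
Proof.
move=> P0 Psqr x N xN0.
suff Pk k : forall y, rpowS y (2 ^ k).-1 = 0 -> P y.
  apply: (Pk N); apply: rpowS_eq0 xN0.
  by have := ltn_expl N (ltnSn 1); lia.
elim: k => [|k IH] y /= y0; first by rewrite y0.
apply/Psqr/IH; rewrite rpowS_sqr -y0; congr rpowS.
by rewrite expnS; have := expn_gt0 2 k; lia.
Qed.

End RngArithmetic.

Definition rhom (T R : finRng) (h : T -> R) :=
  {morph h : a b / a + b} /\ {morph h : a b / rmul a b}.

Section Homomorphisms.
Variables (T R : finRng) (h : T -> R).
Hypothesis hh : rhom h.

Lemma rhom0 : h 0 = 0.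
Proof. by apply: (@addrI _ (h 0)); rewrite -hh.1 !addr0. Qed.

Lemma rhomN a : h (- a) = - h a.
Proof. by apply: (@addrI _ (h a)); rewrite -hh.1 !subrr rhom0. Qed.

Lemma reval_rhom v t : reval (fun n => h (v n)) t = h (reval v t).
Proof.
have [hD hM] := hh.
by elim: t => [n||a IHa b IHb|a IHa|a IHa b IHb] /=;
  rewrite ?rhom0 ?hD ?hM ?rhomN ?IHa ?IHb.
Qed.

End Homomorphisms.

Lemma eq_reval (R : finRng) (v w : nat -> R) t :
  v =1 w -> reval v t = reval w t.
Proof.
by move=> vw; elim: t => [n||a IHa b IHb|a IHa|a IHa b IHb] /=; rewrite ?IHa ?IHb.
Qed.

Lemma in_variety_subdirect {M : variety} (T : finRng) (I : Type) (Rs : I -> finRng)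
    (hs : forall i, T -> Rs i) :
  (forall i, in_variety M (Rs i)) -> (forall i, rhom (hs i)) ->
  (forall a b, (forall i, hs i a = hs i b) -> a = b) -> in_variety M T.
Proof.
move=> MR hh hsep e Me v; apply: hsep => i.
by rewrite -!reval_rhom //; apply: MR.
Qed.

Lemma in_variety_sub {M : variety} (T R : finRng) (h : T -> R) :
  in_variety M R -> rhom h -> injective h -> in_variety M T.
Proof.
move=> MR hh hinj.
by apply: (@in_variety_subdirect M T unit (fun=> R) (fun=> h)) => // a b /(_ tt)/hinj.
Qed.

Lemma in_variety_image {M : variety} (T R : finRng) (h : T -> R) (g : R -> T) :
  in_variety M T -> rhom h -> cancel g h -> in_variety M R.
Proof.
move=> MT hh hgK e Me v.
rewrite !(@eq_reval _ v (fun n => h (g (v n)))) => [|n|n]; rewrite ?hgK //.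
by rewrite !(reval_rhom hh) (MT e Me).
Qed.


Definition zring (V : finZmodType) : finRng.
Proof. by refine (@FinRng V (fun _ _ => 0) _ _ _) => *; rewrite ?addr0. Defined.

Definition rng_of (R : finNzRingType) : finRng :=
  @FinRng R (@GRing.mul _) (@mulrA _) (@mulrDl _) (@mulrDr _).

Definition trivial_rng : finRng := zring 'I_1.

Lemma rhom_zring (V W : finZmodType) (f : V -> W) :
  {morph f : a b / a + b} -> rhom (f : zring V -> zring W).
Proof.
move=> fD; split=> // a b /=.
by apply: (@addrI _ (f 0)); rewrite -fD !addr0.
Qed.

Lemma zero_divisor_zring (V : finZmodType) (x : zring V) :
  zero_divisor (zring V) x = (x != 0).
Proof.
rewrite /zero_divisor; case: eqP => //= x0; apply/existsP; exists x.
by rewrite eqxx andbT; apply/eqP.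
Qed.

Lemma in_variety_trivial (M : variety) : in_variety M trivial_rng.
Proof. by move=> e _ v; apply: ord_inj; rewrite !ord1. Qed.

Lemma mulrn_modn (V : zmodType) (x : V) m n : x *+ n = 0 -> x *+ (m %% n) = x *+ m.
Proof. by move=> xn0; rewrite {2}(divn_eq m n) mulrnDr mulnC mulrnA xn0 mul0rn add0r. Qed.

Section CyclicSubgroup.
Variables (V : finZmodType) (x : V) (n : nat).
Hypotheses (n_gt1 : (1 < n)%N) (ox : #[x]%g = n).

Lemma mulrn_order : x *+ n = 0.
Proof. by rewrite -ox -zmodXgE expg_order. Qed.

Lemma mulrn_modZp m : x *+ (m %% (Zp_trunc n).+2) = x *+ m.
Proof. by rewrite Zp_cast // mulrn_modn // mulrn_order. Qed.

Lemma mulrn_ZpD (a b : 'Z_n) : x *+ (a + b)%R = x *+ a + x *+ b.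
Proof. by rewrite /= mulrn_modZp mulrnDr. Qed.

Lemma mulrn_Zp_inj : injective (fun a : 'Z_n => x *+ a).
Proof.
move=> a b /= eq_ab; apply: ord_inj.
have lt_n (c : 'Z_n) : (c < n)%N by rewrite -[n in (_ < n)%N]Zp_cast.
have : (x ^+ a == x ^+ b)%g by rewrite !zmodXgE eq_ab.
by rewrite eq_expg_mod_order ox !modn_small // => /eqP.
Qed.

End CyclicSubgroup.

Definition zprod (V W : finZmodType) := (V * W)%type.
HB.instance Definition _ V W := GRing.Zmodule.on (zprod V W).
HB.instance Definition _ V W := Finite.on (zprod V W).

Lemma in_variety_Zp_idempotent {M : variety} (R : finRng) (e : R) n :
  in_variety M R -> rmul e e = e -> (1 < n)%N -> #[e]%g = n ->
  in_variety M (rng_of 'Z_n).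
Proof.
move=> MR ee n_gt1 oe.
apply: (@in_variety_sub M (rng_of 'Z_n) R (fun a => e *+ a) MR); last exact: mulrn_Zp_inj.
split=> a b /=; first exact: mulrn_ZpD.
by rewrite mulrn_modZp // rmulnl rmulnr ee -mulrnA mulnC.
Qed.

Lemma in_variety_zring_Zp {M : variety} (R : finRng) (w : R) n :
  in_variety M R -> rmul w w = 0 -> (1 < n)%N -> #[w]%g = n ->
  in_variety M (zring 'Z_n).
Proof.
move=> MR ww n_gt1 ow.
apply: (@in_variety_sub M (zring 'Z_n) R (fun a => w *+ a) MR); last exact: mulrn_Zp_inj.
split=> a b /=; first exact: mulrn_ZpD.
by rewrite rmulnl rmulnr ww !mul0rn.
Qed.

Lemma in_variety_Fp {M : variety} n p : (1 < n)%N -> prime p -> (p %| n)%N ->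
  in_variety M (rng_of 'Z_n) -> in_variety M (rng_of 'F_p).
Proof.
move=> n_gt1 p_pr p_dvd_n MZn.
have modnK m : ((m %% (Zp_trunc n).+2)%:R : 'F_p) = m%:R.
  by rewrite (Zp_cast n_gt1) -Fp_nat_mod // modn_dvdm // Fp_nat_mod.
apply: (@in_variety_image M (rng_of 'Z_n) (rng_of 'F_p)
                          (fun a => (a : nat)%:R) (fun y => inZp y) MZn).
- by split=> a b /=; rewrite modnK ?natrD ?natrM.
- by move=> y; rewrite /= modnK natr_Zp.
Qed.

Lemma in_variety_zring_prod {M : variety} (V W : finZmodType) :
  in_variety M (zring V) -> in_variety M (zring W) ->
  in_variety M (zring (zprod V W)).
Proof.
move=> MV MW.
apply: (@in_variety_subdirect M (zring (zprod V W)) bool (fun b => zring (if b then V else W))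
          (fun b => if b as b return zprod V W -> zring (if b then V else W)
                    then fst else snd)).
- by case.
- by case; apply: rhom_zring.
- by move=> [a1 a2] [b1 b2] eq_ab; rewrite [a1](eq_ab true) [a2](eq_ab false).
Qed.


Lemma gamma_iso_idomain_trivial (D : finIdomainType) :
  gamma_iso (rng_of D) trivial_rng.
Proof.
have no_zd (x : rng_of D) : zero_divisor (rng_of D) x = false.
  apply/negP => /andP [x0 /existsP [y /andP [y0]]].
  by rewrite /= !mulf_eq0 (negPf x0) (negPf y0).
exists (fun=> 0); split=> [x|x y|y|x y]; rewrite ?inE /in_mem /= ?no_zd //.
by rewrite /zero_divisor ord1 eqxx.
Qed.

Lemma not_ring_iso_trivial (R : finNzRingType) : ~ ring_iso (rng_of R) trivial_rng.
Proof.
move=> [f [/bij_inj f_inj _ _]].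
have /f_inj/eqP : f 0 = f 1 by apply: ord_inj; rewrite !ord1.
by rewrite eq_sym oner_eq0.
Qed.

Lemma gamma_iso_zring (V W : finZmodType) : #|V| = #|W| ->
  gamma_iso (zring V) (zring W).
Proof.
move=> card_VW.
pose f0 (x : V) : W := enum_val (cast_ord card_VW (enum_rank x)).
have f0_inj : injective f0.
  by move=> x y /enum_val_inj/cast_ord_inj/enum_rank_inj.
pose f x := f0 x - f0 0.
have f_inj : injective f by move=> x y /addIr/f0_inj.
have f0_0 : f 0 = 0 by rewrite /f subrr.
have /(inj_card_onto f_inj) f_onto : (#|W| <= #|V|)%N by rewrite card_VW.
exists f; split=> [x|x y _ _|y|x y _ _]; rewrite ?inE /in_mem /= ?zero_divisor_zring.
- by apply: contraNneq => fx0; apply/eqP/f_inj; rewrite fx0 f0_0.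
- exact: f_inj.
- move=> y0; have /codomP [x fx] := f_onto y.
  exists x => //; rewrite zero_divisor_zring.
  by apply: contraNneq y0 => x0; rewrite fx x0 f0_0.
- by rewrite /zd_adj /= !eqxx (inj_eq f_inj).
Qed.

Lemma card_Zp_sqr p : prime p -> #|'Z_(p ^ 2)| = #|{: zprod 'Z_p 'Z_p}|.
Proof.
move=> p_pr; have p_gt1 := prime_gt1 p_pr.
have p2_gt1 : (1 < p ^ 2)%N by rewrite (ltn_trans p_gt1) // -{1}(expn1 p) ltn_exp2l.
by rewrite card_prod !card_ord !Zp_cast // expnS expn1.
Qed.

Lemma not_ring_iso_Zp_sqr p : prime p ->
  ~ ring_iso (zring 'Z_(p ^ 2)) (zring (zprod 'Z_p 'Z_p)).
Proof.
move=> p_pr [f [/bij_inj f_inj fD _]]; have p_gt1 := prime_gt1 p_pr.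
have f0 : f 0 = 0 by apply: (@addrI _ (f 0)); rewrite -fD !addr0.
have fn a n : f (a *+ n) = f a *+ n.
  by elim: n => [|n IH]; rewrite ?f0 // !mulrS fD IH.
have char_p (u : zprod 'Z_p 'Z_p) : u *+ p = 0.
  have mulrn_pair n : u *+ n = (u.1 *+ n, u.2 *+ n).
    by elim: n => [|n IH]; rewrite ?mulr0n // !mulrS IH.
  have char_Zp (a : 'Z_p) : a *+ p = 0 by rewrite -mulr_natr pchar_Zp // mulr0.
  by rewrite mulrn_pair !char_Zp.
have /f_inj/(congr1 val) : f (1 *+ p) = f 0 by rewrite fn char_p f0.
have lt_p_p2 : (p < p ^ 2)%N by rewrite -{1}(expn1 p) ltn_exp2l.
rewrite /= val_Zp_nat ?modn_small ?(ltn_trans p_gt1) //.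
by move/eqP; rewrite gtn_eqF ?prime_gt0.
Qed.

Lemma order_dvdn_mulrn (V : finZmodType) (x : V) m :
  (#[x]%g %| m)%N = (x *+ m == 0).
Proof. by rewrite order_dvdn zmodXgE. Qed.

Lemma order_pfactor (V : finZmodType) (x : V) p k : prime p ->
  x *+ (p ^ k.+1) = 0 -> x *+ (p ^ k) != 0 -> #[x]%g = (p ^ k.+1)%N.
Proof.
move=> p_pr /eqP xk1 /negP xk; move: xk1 xk; rewrite -!order_dvdn_mulrn.
move=> /(dvdn_pfactor _ _ p_pr) [m le_m ->] /negP ndvd.
congr expn; apply/eqP; rewrite eqn_leq le_m.
by rewrite ltnNge; apply: contra ndvd => le_mk; apply: dvdn_exp2l.
Qed.

Lemma mulrn_prod_primes_sqr (V : finZmodType) (x : V) :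
  (forall p, prime p -> (logn p #[x]%g <= 2)%N) ->
  x *+ (\prod_(q <- primes #|V|) q ^ 2) = 0.
Proof.
move=> logn_le2; apply/eqP; rewrite -order_dvdn_mulrn.
apply/(dvdn_partP _ (order_gt0 x)) => p; rewrite inE mem_primes => /and3P [p_pr _ p_dvd].
rewrite p_part; apply: dvdn_trans (dvdn_exp2l p (logn_le2 p p_pr)) _.
have pV : p \in primes #|V|.
  rewrite mem_primes p_pr (dvdn_trans p_dvd) ?andbT //=.
    by apply/card_gt0P; exists x.
  by rewrite -cardsT order_dvdG ?inE.
by rewrite (big_rem _ pV) dvdn_mulr.
Qed.

Section GammaDetermined.
Variable M : variety.
Hypothesis gammaM : forall R S : finRng,
  in_variety M R -> in_variety M S -> gamma_iso R S -> ring_iso R S.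

Lemma idempotent_eq0 (R : finRng) (e : R) :
  in_variety M R -> rmul e e = e -> e = 0.
Proof.
move=> MR ee; apply/eqP/negPn/negP => e_neq0.
have n_gt1 : (1 < #[e]%g)%N by rewrite ltn_neqAle order_gt0 eq_sym order_eq1 e_neq0.
have p_pr := pdiv_prime n_gt1.
apply: (@not_ring_iso_trivial 'F_(pdiv #[e]%g)); apply: gammaM.
- apply: (in_variety_Fp n_gt1 p_pr (pdiv_dvd _)).
  exact: in_variety_Zp_idempotent MR ee n_gt1 _.
- exact: in_variety_trivial.
- exact: gamma_iso_idomain_trivial.
Qed.

Lemma nilpotent (R : finRng) (x : R) : in_variety M R -> exists N, rpowS x N = 0.
Proof.
by move=> MR; have [k ek] := exists_idempotent_power x; exists k; apply: idempotent_eq0.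
Qed.

Lemma sqr0_mulrn_sqr_eq0 (R : finRng) (w : R) p : in_variety M R -> prime p ->
  rmul w w = 0 -> w *+ (p ^ 2) = 0 -> w *+ p = 0.
Proof.
move=> MR p_pr ww wp2; apply/eqP/negPn/negP => wp_neq0.
have p_gt1 := prime_gt1 p_pr.
have p2_gt1 : (1 < p ^ 2)%N by rewrite (ltn_trans p_gt1) // -{1}(expn1 p) ltn_exp2l.
have ow : #[w]%g = (p ^ 2)%N by apply: order_pfactor; rewrite ?expn1.
pose z := w *+ p.
have zz : rmul z z = 0 by rewrite rmulnl rmulnr ww !mul0rn.
have oz : #[z]%g = p.
  have := @order_pfactor _ z p 0 p_pr; rewrite expn0 expn1; apply => //.
  by rewrite -mulrnA mulnn.
apply: (not_ring_iso_Zp_sqr p_pr); apply: gammaM.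
- exact: in_variety_zring_Zp MR ww p2_gt1 ow.
- by apply: in_variety_zring_prod; apply: in_variety_zring_Zp MR zz p_gt1 oz.
- exact/gamma_iso_zring/card_Zp_sqr.
Qed.

Lemma mulrn_cube_eq0 (R : finRng) (x : R) p : in_variety M R -> prime p ->
  x *+ (p ^ 3) = 0 -> x *+ (p ^ 2) = 0.
Proof.
move=> MR p_pr; have [N xN0] := nilpotent x MR.
have p2 : (p ^ 2 = p * p)%N by rewrite expnS expn1.
have p3 : (p ^ 3 = p * p ^ 2)%N by rewrite expnS.
apply: (nilpotent_sqr_ind (P := fun y => y *+ (p ^ 3) = 0 -> y *+ (p ^ 2) = 0)) xN0.
  by move=> _; apply: mul0rn.
(* y p is a square-zero element killed by p^2 once y^2 p^2 = 0 *)
move=> y IH yp3; have yyp2 : rmul y y *+ (p ^ 2) = 0.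
  by apply: IH; rewrite -rmulnr yp3 rmul0r.
rewrite p2 mulrnA; apply: sqr0_mulrn_sqr_eq0 p_pr _ _ => //.
- by rewrite rmulnl rmulnr -mulrnA -p2 yyp2.
- by rewrite -mulrnA -p3 yp3.
Qed.

Lemma logn_order_le2 (R : finRng) (x : R) p : in_variety M R -> prime p ->
  (logn p #[x]%g <= 2)%N.
Proof.
move=> MR p_pr; rewrite leqNgt -(pfactor_dvdn 3 p_pr (order_gt0 x)).
apply/negP => /dvdnP [c ox].
have c_gt0 : (0 < c)%N by have := order_gt0 x; rewrite ox muln_gt0 => /andP [].
have xc3 : x *+ c *+ (p ^ 3) = 0.
  by apply/eqP; rewrite -mulrnA -order_dvdn_mulrn ox.
have /eqP := mulrn_cube_eq0 MR p_pr xc3.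
by rewrite -mulrnA -order_dvdn_mulrn ox dvdn_pmul2l // dvdn_Pexp2l ?prime_gt1.
Qed.

End GammaDetermined.

Theorem proposition8 (M : variety) :
  (forall R S : finRng, in_variety M R -> in_variety M S ->
     gamma_iso R S -> ring_iso R S) ->
  forall R : finRng, in_variety M R ->
    exists qs : seq nat,
      [/\ uniq qs, all prime qs &
          forall x : R, x *+ (\prod_(q <- qs) q ^ 2)%N = 0].
Proof.
move=> gammaM R MR; exists (primes #|R|); split.
- exact: primes_uniq.
- by apply/allP => q; rewrite mem_primes => /andP [].
- move=> x; apply: mulrn_prod_primes_sqr => p p_pr.
  exact: logn_order_le2 gammaM _ _ _ MR p_pr.
Qed.
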